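(* Let $E$ be a pseudo effect algebra satisfying (RDP) and let $s_1,s_2\in\mathcal S(E)$. Then $s_1\wedge s_2\in\mathcal S(E)$ if and only if $s_1=s_2$, if and only if $s_1\vee s_2\in\mathcal S(E)$ (lattice operations taken in $\mathcal J(E)$). Moreover, putting $s_\lambda:=\lambda s_1+(1-\lambda)s_2$ for $\lambda\in[0,1]$, we have $s_1\wedge s_2=\bigwedge\{s_\lambda:\lambda\in[0,1]\}$ (infimum in $\mathcal J(E)$), and this is a measure on $E$.
   Context: Pseudo effect algebra: partial algebra $(E;+,0,1)$ such that for all $a,b,c$: (i) $a+b$ and $(a+b)+c$ exist iff $b+c$ and $a+(b+c)$ exist, and then they are equal; (ii) there is exactly one $d$ and one $e$ with $a+d=e+a=1$; (iii) if $a+b$ exists there are $d,e$ with $a+b=d+a=b+e$; (iv) if $1+a$ or $a+1$ exists then $a=0$. (RDP): whenever $a_1+a_2=b_1+b_2$ there are $d_1,\dots,d_4$ with $d_1+d_2=a_1$, $d_3+d_4=a_2$, $d_1+d_3=b_1$, $d_2+d_4=b_2$. Signed measure: $m:E\to\mathbb R$ additive on defined sums; measure: nonnegative signed measure; state: measure with $s(1)=1$; $\mathcal S(E)$: set of states. $\mathcal J(E)$: signed measures that are differences of two measures, ordered by $m_1\le^+m_2$ iff $m_2-m_1$ is a measure; under (RDP) it is a Dedekind complete lattice-ordered group. *)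

From Stdlib Require Import Reals.
Open Scope R_scope.

(* Pseudo effect algebra (E; +, 0, 1) with + a partial operation,
   modelled as E -> E -> option E (None = undefined). *)
Record PEA := {
  pcar :> Type;
  padd : pcar -> pcar -> option pcar;
  pzero : pcar;
  pone : pcar;
  (* (i): a+b and (a+b)+c exist iff b+c and a+(b+c) exist, and then equal.
     Expressed as equality of the (partial) results of both bracketings. *)
  pea_assoc : forall a b c : pcar,
    (match padd a b with Some d => padd d c | None => None end) =
    (match padd b c with Some e => padd a e | None => None end);
  pea_compl : forall a : pcar,
    (exists! d, padd a d = Some pone) /\ (exists! e, padd e a = Some pone);
  pea_conj : forall a b x : pcar, padd a b = Some x ->
    exists d e, padd d a = Some x /\ padd b e = Some x;
  pea_one : forall a : pcar,
    (padd pone a <> None \/ padd a pone <> None) -> a = pzero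
}.

Definition RDP (E : PEA) : Prop :=
  forall a1 a2 b1 b2 x : E,
    padd E a1 a2 = Some x -> padd E b1 b2 = Some x ->
    exists d1 d2 d3 d4 : E,
      padd E d1 d2 = Some a1 /\ padd E d3 d4 = Some a2 /\
      padd E d1 d3 = Some b1 /\ padd E d2 d4 = Some b2.

Definition signed_measure (E : PEA) (m : E -> R) : Prop :=
  forall a b c : E, padd E a b = Some c -> m c = m a + m b.

Definition is_measure (E : PEA) (m : E -> R) : Prop :=
  signed_measure E m /\ forall a : E, 0 <= m a.

Definition is_state (E : PEA) (m : E -> R) : Prop :=
  is_measure E m /\ m (pone E) = 1.

Definition inJ (E : PEA) (m : E -> R) : Prop :=
  exists m1 m2 : E -> R, is_measure E m1 /\ is_measure E m2 /\
    forall a : E, m a = m1 a - m2 a.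

Definition leJ (E : PEA) (m1 m2 : E -> R) : Prop :=
  is_measure E (fun a => m2 a - m1 a).

Definition is_infJ (E : PEA) (S : (E -> R) -> Prop) (m : E -> R) : Prop :=
  inJ E m /\ (forall t, S t -> leJ E m t) /\
  (forall k, inJ E k -> (forall t, S t -> leJ E k t) -> leJ E k m).

Definition is_supJ (E : PEA) (S : (E -> R) -> Prop) (m : E -> R) : Prop :=
  inJ E m /\ (forall t, S t -> leJ E t m) /\
  (forall k, inJ E k -> (forall t, S t -> leJ E t k) -> leJ E m k).

Definition is_meetJ (E : PEA) (s1 s2 m : E -> R) : Prop :=
  is_infJ E (fun t => t = s1 \/ t = s2) m.
Definition is_joinJ (E : PEA) (s1 s2 m : E -> R) : Prop :=
  is_supJ E (fun t => t = s1 \/ t = s2) m.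

Definition convJ (E : PEA) (s1 s2 : E -> R) (l : R) : E -> R :=
  fun a => l * s1 a + (1 - l) * s2 a.

(* The meet of two measures s1, s2 in J(E) is given by the Riesz formula
   (s1 /\ s2)(a) = inf { s1 a1 + s2 a2 : a1 + a2 = a }.  Condition (iii) makes
   this function subadditive and (RDP) makes it superadditive, so it is a
   measure, and s1 + s2 - s1 /\ s2 is the join.  Every s_lambda lies above the
   meet and s1 = s_1, s2 = s_0 are among them, so the meet is also the infimum
   of the segment.  Finally, if the meet takes the value 1 at 1, then for
   a + d = 1 the inequalities m a <= s_i a and m d <= s_i d must all be
   equalities, whence s1 = s2. *)

From Stdlib Require Import Reals Lra FunctionalExtensionality.
Open Scope R_scope.

Section PseudoEffectAlgebra.

Variable E : PEA.

Lemma padd_assoc_lr (a b c d x : E) :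
  padd E a b = Some d -> padd E d c = Some x ->
  exists e, padd E b c = Some e /\ padd E a e = Some x.
Proof.
  intros Hab Hdc. pose proof (pea_assoc E a b c) as A.
  rewrite Hab, Hdc in A.
  destruct (padd E b c) as [e|]; [exists e; auto | discriminate].
Qed.

Lemma padd_assoc_rl (a b c e x : E) :
  padd E b c = Some e -> padd E a e = Some x ->
  exists d, padd E a b = Some d /\ padd E d c = Some x.
Proof.
  intros Hbc Hae. pose proof (pea_assoc E a b c) as A.
  rewrite Hbc, Hae in A.
  destruct (padd E a b) as [d|]; [exists d; auto | discriminate].
Qed.

Lemma padd_one0 : padd E (pone E) (pzero E) = Some (pone E).
Proof.
  destruct (pea_compl E (pone E)) as [[d [Hd _]] _].
  assert (d = pzero E) as <- by (apply pea_one; left; rewrite Hd; discriminate).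
  exact Hd.
Qed.

Lemma padd0_one : padd E (pzero E) (pone E) = Some (pone E).
Proof.
  destruct (pea_compl E (pone E)) as [_ [d [Hd _]]].
  assert (d = pzero E) as <- by (apply pea_one; right; rewrite Hd; discriminate).
  exact Hd.
Qed.

(* Both unit laws reduce to uniqueness of complements: if e + a = 1 then also
   e + (a + 0) = 1. *)
Lemma padd0r (a : E) : padd E a (pzero E) = Some a.
Proof.
  destruct (pea_compl E a) as [_ [e [Hea _]]].
  destruct (padd_assoc_lr e a (pzero E) (pone E) (pone E) Hea padd_one0)
    as [x [Hx Hex]].
  destruct (pea_compl E e) as [[d [_ Huniq]] _].
  replace a with x at 2; auto.
  rewrite <- (Huniq x Hex); apply Huniq; auto.
Qed.

Lemma padd0l (a : E) : padd E (pzero E) a = Some a.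
Proof.
  destruct (pea_compl E a) as [[d [Had _]] _].
  destruct (padd_assoc_rl (pzero E) a d (pone E) (pone E) Had padd0_one)
    as [y [Hy Hyd]].
  destruct (pea_compl E d) as [_ [e [_ Huniq]]].
  replace a with y at 2; auto.
  rewrite <- (Huniq y Hyd); apply Huniq; auto.
Qed.

End PseudoEffectAlgebra.

Section SignedMeasures.

Variable E : PEA.

Lemma signed_measure0 (m : E -> R) : signed_measure E m -> m (pzero E) = 0.
Proof. intros Hm. pose proof (Hm _ _ _ (padd0r E (pzero E))). lra. Qed.

Lemma signed_measure_add (m1 m2 : E -> R) :
  signed_measure E m1 -> signed_measure E m2 ->
  signed_measure E (fun a => m1 a + m2 a).
Proof. intros H1 H2 a b c H. rewrite (H1 _ _ _ H), (H2 _ _ _ H). ring. Qed.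

Lemma signed_measure_sub (m1 m2 : E -> R) :
  signed_measure E m1 -> signed_measure E m2 ->
  signed_measure E (fun a => m1 a - m2 a).
Proof. intros H1 H2 a b c H. rewrite (H1 _ _ _ H), (H2 _ _ _ H). ring. Qed.

Lemma measure_add (m1 m2 : E -> R) :
  is_measure E m1 -> is_measure E m2 -> is_measure E (fun a => m1 a + m2 a).
Proof.
  intros [S1 P1] [S2 P2]. split.
  - apply signed_measure_add; auto.
  - intros a. specialize (P1 a); specialize (P2 a); lra.
Qed.

Lemma measure_inJ (m : E -> R) : is_measure E m -> inJ E m.
Proof.
  intros Hm. exists m, (fun _ => 0). split; [auto | split].
  - split; [intros a b c _; ring | intros _; lra].
  - intros a; ring.
Qed.

Lemma inJ_signed_measure (m : E -> R) : inJ E m -> signed_measure E m.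
Proof.
  intros [m1 [m2 [[S1 _] [[S2 _] Hm]]]] a b c H.
  rewrite !Hm, (S1 _ _ _ H), (S2 _ _ _ H). ring.
Qed.

Lemma leJ_le (m1 m2 : E -> R) (a : E) : leJ E m1 m2 -> m1 a <= m2 a.
Proof. intros [_ P]. specialize (P a). lra. Qed.

Lemma leJ_intro (m1 m2 : E -> R) :
  signed_measure E m1 -> signed_measure E m2 -> (forall a, m1 a <= m2 a) ->
  leJ E m1 m2.
Proof.
  intros S1 S2 Hle. split.
  - apply signed_measure_sub; auto.
  - intros a. specialize (Hle a). lra.
Qed.

Lemma leJ_convJ (m s1 s2 : E -> R) (l : R) :
  0 <= l <= 1 -> leJ E m s1 -> leJ E m s2 -> leJ E m (convJ E s1 s2 l).
Proof.
  intros Hl [S1 P1] [S2 P2]. unfold convJ. split.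
  - intros a b c H.
    pose proof (S1 _ _ _ H). pose proof (S2 _ _ _ H). nra.
  - intros a. specialize (P1 a); specialize (P2 a).
    assert (0 <= l * (s1 a - m a)) by (apply Rmult_le_pos; lra).
    assert (0 <= (1 - l) * (s2 a - m a)) by (apply Rmult_le_pos; lra).
    nra.
Qed.

Lemma is_infJ_of_meetJ (S : (E -> R) -> Prop) (s1 s2 m : E -> R) :
  is_meetJ E s1 s2 m -> S s1 -> S s2 -> (forall t, S t -> leJ E m t) ->
  is_infJ E S m.
Proof.
  intros [Hm [_ Hglb]] HS1 HS2 Hlb. split; [auto | split; auto].
  intros k Hk Hkt. apply Hglb; auto.
  intros t [-> | ->]; auto.
Qed.

End SignedMeasures.

Section RieszMeet.

Variable E : PEA.

Definition is_riesz_meet (s1 s2 m : E -> R) : Prop :=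
  (forall a a1 a2, padd E a1 a2 = Some a -> m a <= s1 a1 + s2 a2) /\
  (forall a r, (forall a1 a2, padd E a1 a2 = Some a -> r <= s1 a1 + s2 a2) ->
     r <= m a).

Lemma riesz_meet_exists (s1 s2 : E -> R) :
  (forall a, 0 <= s1 a) -> (forall a, 0 <= s2 a) ->
  exists m, is_riesz_meet s1 s2 m.
Proof.
  intros P1 P2.
  set (Q a r := exists a1 a2, padd E a1 a2 = Some a /\ r = - (s1 a1 + s2 a2)).
  assert (Qbound : forall a, bound (Q a)).
  { intro a. exists 0. intros r [a1 [a2 [_ ->]]].
    specialize (P1 a1); specialize (P2 a2); lra. }
  assert (Qinhab : forall a, exists r, Q a r).
  { intro a. exists (- (s1 a + s2 (pzero E))), a, (pzero E).
    split; [apply padd0r | reflexivity]. }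
  exists (fun a => - proj1_sig (completeness (Q a) (Qbound a) (Qinhab a))).
  split; intros a.
  - intros a1 a2 H.
    destruct (completeness (Q a) (Qbound a) (Qinhab a)) as [sup [Hub Hleast]]; simpl.
    assert (Q a (- (s1 a1 + s2 a2))) as Hq by (exists a1, a2; auto).
    specialize (Hub _ Hq). lra.
  - intros r Hr.
    destruct (completeness (Q a) (Qbound a) (Qinhab a)) as [sup [Hub Hleast]]; simpl.
    assert (sup <= - r); [|lra].
    apply Hleast. intros x [a1 [a2 [H ->]]]. specialize (Hr _ _ H). lra.
Qed.

Section Properties.

Variables s1 s2 m : E -> R.
Hypothesis Hm : is_riesz_meet s1 s2 m.
Hypotheses (S1 : signed_measure E s1) (S2 : signed_measure E s2).
Hypotheses (P1 : forall a, 0 <= s1 a) (P2 : forall a, 0 <= s2 a).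

Lemma riesz_meet_le_l (a : E) : m a <= s1 a.
Proof.
  pose proof (proj1 Hm _ _ _ (padd0r E a)) as H.
  rewrite (signed_measure0 E s2 S2) in H. lra.
Qed.

Lemma riesz_meet_le_r (a : E) : m a <= s2 a.
Proof.
  pose proof (proj1 Hm _ _ _ (padd0l E a)) as H.
  rewrite (signed_measure0 E s1 S1) in H. lra.
Qed.

Lemma riesz_meet_greatest (k : E -> R) (a : E) :
  signed_measure E k -> (forall x, k x <= s1 x) -> (forall x, k x <= s2 x) ->
  k a <= m a.
Proof.
  intros Sk K1 K2. apply (proj2 Hm). intros a1 a2 H.
  rewrite (Sk _ _ _ H). specialize (K1 a1); specialize (K2 a2). lra.
Qed.

(* Condition (iii) moves b1 in front of a2 at the cost of replacing it by an
   element d with s1 d = s1 b1, rewriting c as (a1 + d) + (a2 + b2). *)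
Lemma riesz_meet_subadditive (a b c : E) :
  padd E a b = Some c -> m c <= m a + m b.
Proof.
  intros Habc.
  assert (Hsplit : forall a1 a2 b1 b2, padd E a1 a2 = Some a ->
            padd E b1 b2 = Some b -> m c <= s1 a1 + s2 a2 + (s1 b1 + s2 b2)).
  { intros a1 a2 b1 b2 Ha Hb.
    destruct (padd_assoc_lr E a1 a2 b a c Ha Habc) as [e [He Hae]].
    destruct (padd_assoc_rl E a2 b1 b2 b e Hb He) as [x [Hx Hxe]].
    destruct (pea_conj E a2 b1 x Hx) as [d [_ [Hd _]]].
    destruct (padd_assoc_lr E d a2 b2 x e Hd Hxe) as [f [Hf Hdf]].
    destruct (padd_assoc_rl E a1 d f e c Hdf Hae) as [g [Hg Hgf]].
    pose proof (proj1 Hm _ _ _ Hgf) as H.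
    rewrite (S1 _ _ _ Hg), (S2 _ _ _ Hf) in H.
    pose proof (S1 _ _ _ Hx). pose proof (S1 _ _ _ Hd). lra. }
  assert (m c - m b <= m a); [|lra].
  apply (proj2 Hm). intros a1 a2 Ha.
  assert (m c - (s1 a1 + s2 a2) <= m b); [|lra].
  apply (proj2 Hm). intros b1 b2 Hb. specialize (Hsplit _ _ _ _ Ha Hb). lra.
Qed.

Section WithRDP.

Hypothesis hRDP : RDP E.

Lemma riesz_meet_superadditive (a b c : E) :
  padd E a b = Some c -> m a + m b <= m c.
Proof.
  intros Habc. apply (proj2 Hm). intros c1 c2 Hc.
  destruct (hRDP c1 c2 a b c Hc Habc)
    as [d1 [d2 [d3 [d4 [H12 [H34 [H13 H24]]]]]]].
  pose proof (proj1 Hm _ _ _ H13). pose proof (proj1 Hm _ _ _ H24).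
  rewrite (S1 _ _ _ H12), (S2 _ _ _ H34). lra.
Qed.

Lemma riesz_meet_measure : is_measure E m.
Proof.
  split.
  - intros a b c H. apply Rle_antisym.
    + apply riesz_meet_subadditive; auto.
    + apply riesz_meet_superadditive; auto.
  - intros a. apply (proj2 Hm). intros a1 a2 _.
    specialize (P1 a1); specialize (P2 a2). lra.
Qed.

Lemma riesz_meet_is_meetJ : is_meetJ E s1 s2 m.
Proof.
  pose proof riesz_meet_measure as [Sm _].
  split; [apply measure_inJ, riesz_meet_measure | split].
  - intros t [-> | ->]; apply leJ_intro; auto.
    + apply riesz_meet_le_l.
    + apply riesz_meet_le_r.
  - intros k Hk Hkt. pose proof (inJ_signed_measure E k Hk) as Sk.
    apply leJ_intro; auto. intros a. apply riesz_meet_greatest; auto.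
    + intros x. apply leJ_le, Hkt; auto.
    + intros x. apply leJ_le, Hkt; auto.
Qed.

Lemma riesz_meet_joinJ : is_joinJ E s1 s2 (fun a => s1 a + s2 a - m a).
Proof.
  pose proof riesz_meet_measure as [Sm Pm].
  assert (Sj : signed_measure E (fun a => s1 a + s2 a - m a))
    by (apply signed_measure_sub; auto; apply signed_measure_add; auto).
  split; [|split].
  - exists (fun a => s1 a + s2 a), m. split; [|split; [split; auto | reflexivity]].
    apply measure_add; split; auto.
  - intros t [-> | ->]; apply leJ_intro; auto; intros a.
    + pose proof (riesz_meet_le_r a). lra.
    + pose proof (riesz_meet_le_l a). lra.
  - intros k Hk Hkt. pose proof (inJ_signed_measure E k Hk) as Sk.
    apply leJ_intro; auto. intros a.
    assert (s1 a + s2 a - k a <= m a); [|lra].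
    apply (riesz_meet_greatest (fun x => s1 x + s2 x - k x)).
    + apply signed_measure_sub; auto. apply signed_measure_add; auto.
    + intros x. pose proof (leJ_le E s2 k x (Hkt s2 (or_intror eq_refl))). lra.
    + intros x. pose proof (leJ_le E s1 k x (Hkt s1 (or_introl eq_refl))). lra.
Qed.

Lemma riesz_meet_is_infJ_convJ :
  is_infJ E (fun t => exists l, 0 <= l <= 1 /\ t = convJ E s1 s2 l) m.
Proof.
  pose proof riesz_meet_is_meetJ as Hmeet.
  apply (is_infJ_of_meetJ E _ s1 s2); auto.
  - exists 1. split; [lra|]. apply functional_extensionality; intros a.
    unfold convJ. ring.
  - exists 0. split; [lra|]. apply functional_extensionality; intros a.
    unfold convJ. ring.
  - intros t [l [Hl ->]]. destruct Hmeet as [_ [Hlb _]].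
    apply leJ_convJ; auto.
Qed.

Lemma riesz_meet_one_eq :
  s1 (pone E) = 1 -> s2 (pone E) = 1 -> m (pone E) = 1 -> s1 = s2.
Proof.
  intros O1 O2 Om. pose proof riesz_meet_measure as [Sm _].
  apply functional_extensionality; intros a.
  destruct (pea_compl E a) as [[d [Had _]] _].
  pose proof (S1 _ _ _ Had). pose proof (S2 _ _ _ Had). pose proof (Sm _ _ _ Had).
  pose proof (riesz_meet_le_l a). pose proof (riesz_meet_le_l d).
  pose proof (riesz_meet_le_r a). pose proof (riesz_meet_le_r d).
  lra.
Qed.

End WithRDP.

End Properties.

Lemma riesz_meet_diag (s m : E -> R) :
  signed_measure E s -> is_riesz_meet s s m -> m = s.
Proof.
  intros Ss Hm. apply functional_extensionality; intros a.
  apply Rle_antisym.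
  - apply (riesz_meet_le_l s s m Hm Ss).
  - apply (riesz_meet_greatest s s m Hm s a Ss); intros x; lra.
Qed.

End RieszMeet.

Theorem proposition4p3 (E : PEA) (hRDP : RDP E) (s1 s2 : E -> R)
  (h1 : is_state E s1) (h2 : is_state E s2) :
  exists mi mj : E -> R,
    is_meetJ E s1 s2 mi /\ is_joinJ E s1 s2 mj /\
    (is_state E mi <-> s1 = s2) /\ (s1 = s2 <-> is_state E mj) /\
    is_infJ E (fun t => exists l, 0 <= l <= 1 /\ t = convJ E s1 s2 l) mi /\
    is_measure E mi.
Proof.
  destruct h1 as [[S1 P1] O1], h2 as [[S2 P2] O2].
  destruct (riesz_meet_exists E s1 s2 P1 P2) as [m Hm].
  exists m, (fun a => s1 a + s2 a - m a).
  assert (Hmeas : is_measure E m) by (apply (riesz_meet_measure E s1 s2); auto).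
  split; [|split; [|split; [|split; [|split]]]].
  - apply (riesz_meet_is_meetJ E s1 s2); auto.
  - apply (riesz_meet_joinJ E s1 s2); auto.
  - split.
    + intros [_ Om]. apply (riesz_meet_one_eq E s1 s2 m); auto.
    + intros <-. rewrite (riesz_meet_diag E s1 m S1 Hm). split; [split|]; auto.
  - split.
    + intros <-. rewrite (riesz_meet_diag E s1 m S1 Hm).
      replace (fun a => s1 a + s1 a - s1 a) with s1
        by (apply functional_extensionality; intros a; ring).
      split; [split|]; auto.
    + intros [_ Oj]. apply (riesz_meet_one_eq E s1 s2 m); auto. lra.
  - apply (riesz_meet_is_infJ_convJ E s1 s2); auto.
  - exact Hmeas.
Qed.
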